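(* Let $g\ge2$ and $n\ge2$. Regarding $P_{g,n}(a_1,\dots,a_n)$ as a polynomial in $a_1,\dots,a_n$, we have $P_{g,n}|_{a_i=0}\equiv0$ identically (as a polynomial in the remaining variables) for each $i=1,\dots,n$.
   Context: For $g\ge2$, $n\ge1$, $$P_{g,n}(a_1,\dots,a_n):=\sum_{k=1}^n\frac{(-1)^k(2g-3+k)!}{k!}\sum_{(I_1,\dots,I_k)}\ \sum_{\substack{d_1,\dots,d_k\in\mathbb{Z}_{\ge0}\\ d_1+\cdots+d_k=g-2+n}}\prod_{j=1}^k\binom{2a_{[I_j]}+1}{2d_j}\prod_{i=1}^{|I_j|-1}(2d_j+1-2i),$$ where $(I_1,\dots,I_k)$ runs over ordered $k$-tuples of nonempty pairwise disjoint subsets of $\{1,\dots,n\}$ with union $\{1,\dots,n\}$, $a_{[I]}:=\sum_{\ell\in I}a_\ell$, and $\binom{x}{m}:=x(x-1)\cdots(x-m+1)/m!$ for $m\ge0$, a polynomial in $x$. *)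

From HB Require Import structures.
From mathcomp Require Import all_boot all_order all_algebra.
Set Implicit Arguments. Unset Strict Implicit. Unset Printing Implicit Defensive.
Import Order.TTheory GRing.Theory Num.Theory.
Local Open Scope ring_scope.

Definition binomr (R : numFieldType) (x : R) (m : nat) : R :=
  (\prod_(i < m) (x - i%:R)) / (m`!)%:R.

Definition ordered_set_partition (n k : nat) (I : {ffun 'I_k -> {set 'I_n}}) : bool :=
  [&& [forall j, I j != set0],
      [forall j1, forall j2, (j1 != j2) ==> [disjoint I j1 & I j2]]
    & (\bigcup_(j < k) I j == [set: 'I_n])].

Definition aset (R : numFieldType) (n : nat) (a : 'I_n -> R) (S : {set 'I_n}) : R :=
  \sum_(l in S) a l.

(* P_{g,n}(a_1,...,a_n), evaluated at a point a of R^n.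
   The d_j satisfy d_j <= g-2+n, so ranging d_j over 'I_(g-1+n) loses nothing. *)
Definition Pgn (R : numFieldType) (g n : nat) (a : 'I_n -> R) : R :=
  \sum_(1 <= k < n.+1)
    ((-1) ^+ k * (((2 * g - 3 + k)`!)%:R / (k`!)%:R) *
     \sum_(I : {ffun 'I_k -> {set 'I_n}} | ordered_set_partition I)
       \sum_(d : {ffun 'I_k -> 'I_(g - 1 + n)} |
               (\sum_(j < k) (d j : nat))%N == (g - 2 + n)%N)
         \prod_(j < k)
           (binomr (2 * aset a (I j) + 1) (2 * d j)%N *
            \prod_(1 <= i < #|I j|) (((2 * d j + 1)%N)%:R - ((2 * i)%N)%:R))).

From HB Require Import structures.
From mathcomp Require Import all_boot all_order all_algebra.
From mathcomp Require Import ring zify.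
Set Implicit Arguments. Unset Strict Implicit. Unset Printing Implicit Defensive.
Import Order.TTheory GRing.Theory Num.Theory.
Local Open Scope ring_scope.

(* Write G_k(S) for the inner double sum of P_{g,n}, taken over ordered
   partitions of S into k blocks.  Sort the ordered partitions of {1..n} into
   k+1 blocks according to the block containing i.  If that block is {i}, its
   factor is [d = 0] because a_i = 0, and deleting it leaves a partition of
   T = {1..n} minus i into k blocks, at any of k+1 positions.  Otherwise,
   deleting i leaves a partition of T into k+1 blocks, and since a_i = 0,
   adding i back to a block A of degree d multiplies its factor by
   2d+1-2|A|; summed over the blocks these factors give
   2(g-2+n) + (k+1) - 2(n-1) = 2g-1+k.  Hence
     G_{k+1}({1..n}) = (k+1) G_k(T) + (2g-1+k) G_{k+1}(T),
   and the alternating sum defining P_{g,n} telescopes to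
   (-1)^n (2g-2+n)!/n! G_n(T) - (2g-2)! G_0(T), where both terms vanish
   because T has n-1 >= 1 elements. *)

Lemma card_bigcup_disjoint (T : finType) k (A : 'I_k -> {set T}) :
    (forall j1 j2, j1 != j2 -> [disjoint A j1 & A j2]) ->
  #|\bigcup_(j < k) A j| = (\sum_(j < k) #|A j|)%N.
Proof.
elim: k A => [|k IHk] A disjA; first by rewrite !big_ord0 cards0.
rewrite big_ord_recr [in RHS]big_ord_recr /= cardsU IHk; last first.
  by move=> j1 j2 ne; apply: disjA; rewrite -val_eqE /= val_eqE.
suff -> : (\bigcup_(j < k) A (widen_ord (leqnSn k) j)) :&: A ord_max = set0.
  by rewrite cards0 subn0.
apply/setP => x; rewrite !inE; apply/negbTE/andP => -[/bigcupP[j _ xAj] xAk].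
have ne : widen_ord (leqnSn k) j != ord_max by rewrite neq_ltn /= ltn_ord.
by rewrite (disjointFr (disjA _ _ ne) xAj) in xAk.
Qed.

Section OrderedPartitions.
Variable n : nat.
Implicit Types (S : {set 'I_n}) (k : nat).

Definition ordered_partition_of k S (I : {ffun 'I_k -> {set 'I_n}}) : bool :=
  [&& [forall j, I j != set0],
      [forall j1, forall j2, (j1 != j2) ==> [disjoint I j1 & I j2]]
    & \bigcup_(j < k) I j == S].

Lemma ordered_partitionP k S (I : {ffun 'I_k -> {set 'I_n}}) :
  reflect [/\ forall j, I j != set0,
              forall x j1 j2, x \in I j1 -> x \in I j2 -> j1 = j2
            & forall x, (x \in S) = [exists j, x \in I j]]
          (ordered_partition_of S I).
Proof.
apply: (iffP and3P) => [[/forallP neI disjI /eqP covI] | [neI injI covI]]; split.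
- exact: neI.
- move=> x j1 j2 xj1 xj2; apply/eqP; apply: contraTT xj2 => ne.
  by move: disjI => /forallP/(_ j1)/forallP/(_ j2)/implyP/(_ ne)/disjointFr->.
- by move=> x; rewrite -covI; apply/bigcupP/existsP => -[j]; exists j.
- exact/forallP.
- apply/forallP => j1; apply/forallP => j2; apply/implyP => ne.
  rewrite -setI_eq0; apply/set0Pn => -[x /setIP[xj1 xj2]].
  by rewrite (injI x _ _ xj1 xj2) eqxx in ne.
- apply/eqP/setP => x; rewrite covI; apply/bigcupP/existsP => -[j]; exists j => //.
Qed.

Lemma card_opart k S (I : {ffun 'I_k -> {set 'I_n}}) :
  ordered_partition_of S I -> #|S| = (\sum_(j < k) #|I j|)%N.
Proof.
case/and3P=> _ /forallP disjI /eqP <-; apply: card_bigcup_disjoint => j1 j2.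
by move: (disjI j1) => /forallP/(_ j2)/implyP.
Qed.

Lemma opart_leq_card k S (I : {ffun 'I_k -> {set 'I_n}}) :
  ordered_partition_of S I -> (k <= #|S|)%N.
Proof.
move=> partI; rewrite (card_opart partI) -[k in (k <= _)%N]card_ord -sum1_card.
by case/ordered_partitionP: partI => neI _ _; apply: leq_sum => j _; rewrite card_gt0.
Qed.

End OrderedPartitions.

Section FfunInsert.
Variables (X : Type) (k : nat) (p : 'I_k.+1).

Definition ffun_insert (f : {ffun 'I_k -> X}) (x : X) : {ffun 'I_k.+1 -> X} :=
  [ffun y => if unlift p y is Some z then f z else x].

Definition ffun_delete (f : {ffun 'I_k.+1 -> X}) : {ffun 'I_k -> X} :=
  [ffun z => f (lift p z)].

Lemma ffun_insert_at f x : ffun_insert f x p = x.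
Proof. by rewrite ffunE unlift_none. Qed.

Lemma ffun_insert_lift f x z : ffun_insert f x (lift p z) = f z.
Proof. by rewrite ffunE liftK. Qed.

Lemma ffun_insertK f x : ffun_delete (ffun_insert f x) = f.
Proof. by apply/ffunP => z; rewrite ffunE ffun_insert_lift. Qed.

Lemma ffun_deleteK f : ffun_insert (ffun_delete f) (f p) = f.
Proof. by apply/ffunP => y; rewrite ffunE; case: unliftP => [z|] ->; rewrite ?ffunE. Qed.

End FfunInsert.

Section AddRemovePoint.
Variables (n : nat) (i : 'I_n) (S : {set 'I_n}).
Hypothesis Si : i \in S.

Definition block_of k (I : {ffun 'I_k.+1 -> {set 'I_n}}) : 'I_k.+1 :=
  odflt ord0 [pick j | i \in I j].

Definition add_point k (J : {ffun 'I_k -> {set 'I_n}}) (j : 'I_k) :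
    {ffun 'I_k -> {set 'I_n}} :=
  [ffun y => if y == j then i |: J y else J y].

Definition remove_point k (I : {ffun 'I_k -> {set 'I_n}}) :
    {ffun 'I_k -> {set 'I_n}} :=
  [ffun y => I y :\ i].

Lemma mem_add_point k (J : {ffun 'I_k -> {set 'I_n}}) j y x :
  (x \in add_point J j y) = (y == j) && (x == i) || (x \in J y).
Proof. by rewrite ffunE; case: eqP; rewrite ?inE. Qed.

Lemma mem_remove_point k (I : {ffun 'I_k -> {set 'I_n}}) y x :
  (x \in remove_point I y) = (x != i) && (x \in I y).
Proof. by rewrite ffunE !inE. Qed.

Lemma opart_notin k (J : {ffun 'I_k -> {set 'I_n}}) y :
  ordered_partition_of (S :\ i) J -> (i \in J y) = false.
Proof.
case/ordered_partitionP=> _ _ covJ; apply/negbTE; apply: contraFN (setD11 i S).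
by move=> iJy; rewrite covJ; apply/existsP; exists y.
Qed.

Section BlockOf.
Variables (k : nat) (I : {ffun 'I_k.+1 -> {set 'I_n}}).
Hypothesis partI : ordered_partition_of S I.

Lemma block_ofE j : i \in I j -> block_of I = j.
Proof.
case/ordered_partitionP: partI => _ injI _ iIj.
by rewrite /block_of; case: pickP => [j' /= /injI/(_ iIj) //|/(_ j)]; rewrite iIj.
Qed.

Lemma mem_block_of y : (i \in I y) = (y == block_of I).
Proof.
apply/idP/eqP => [/block_ofE-> // | ->].
case/ordered_partitionP: partI => _ _ covI.
by move: Si; rewrite covI => /existsP[j /[dup] /block_ofE->].
Qed.

Lemma opart_remove_point :
  I (block_of I) != [set i] -> ordered_partition_of (S :\ i) (remove_point I).
Proof.
move=> Ib1; case/ordered_partitionP: partI => neI injI covI.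
apply/ordered_partitionP; split.
- move=> y; have [->|yb] := eqVneq y (block_of I).
    have iIb : i \in I (block_of I) by rewrite mem_block_of.
    by apply: contra Ib1; rewrite ffunE => /eqP Ib0; rewrite -(setD1K iIb) Ib0 setU0.
  have /set0Pn[x xIy] := neI y; apply/set0Pn; exists x.
  rewrite mem_remove_point xIy andbT; apply: contraNneq yb => xi.
  by rewrite -mem_block_of -xi.
- by move=> x j1 j2; rewrite !mem_remove_point => /andP[_ /injI] + /andP[_]; apply.
- move=> x; rewrite !inE covI; apply/andP/existsP => [[xi /existsP[y xIy]]|[y]].
    by exists y; rewrite mem_remove_point xi.
  by rewrite mem_remove_point => /andP[xi xIy]; split; last (apply/existsP; exists y).
Qed.

Lemma add_point_remove_point : add_point (remove_point I) (block_of I) = I.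
Proof.
apply/ffunP => y; apply/setP => x; rewrite mem_add_point mem_remove_point.
by case: (eqVneq x i) => [->|_] /=; rewrite ?mem_block_of ?andbT ?andbF ?orbF.
Qed.

End BlockOf.

Section AddPoint.
Variables (k : nat) (J : {ffun 'I_k -> {set 'I_n}}).
Hypothesis partJ : ordered_partition_of (S :\ i) J.

Lemma opart_add_point j : ordered_partition_of S (add_point J j).
Proof.
have iJ y : (i \in J y) = false := opart_notin y partJ.
case/ordered_partitionP: partJ => neJ injJ covJ; apply/ordered_partitionP; split.
- move=> y; have /set0Pn[x xJy] := neJ y.
  by apply/set0Pn; exists x; rewrite mem_add_point xJy orbT.
- move=> x j1 j2; rewrite !mem_add_point.
  case/orP=> [/andP[/eqP-> /eqP->]|xj1] /orP[/andP[/eqP-> xi]|xj2] //.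
  + by rewrite iJ in xj2.
  + by move: xj1; rewrite (eqP xi) iJ.
  + exact: injJ xj1 xj2.
- move=> x; have [->|xi] := eqVneq x i.
    by rewrite Si; apply/esym/existsP; exists j; rewrite mem_add_point !eqxx.
  have -> : (x \in S) = (x \in S :\ i) by rewrite !inE xi.
  by rewrite covJ; apply: eq_existsb => y; rewrite mem_add_point (negbTE xi) andbF.
Qed.

Lemma remove_point_add_point j : remove_point (add_point J j) = J.
Proof.
apply/ffunP => y; apply/setP => x; rewrite mem_remove_point mem_add_point.
by have [->|] := eqVneq x i; rewrite ?opart_notin ?andbF.
Qed.

Lemma add_point_neq_set1 j : add_point J j j != [set i].
Proof.
have iJ : i \notin J j by rewrite opart_notin.
case/ordered_partitionP: partJ => neJ _ _; apply: contra (neJ j).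
by rewrite ffunE eqxx => /eqP Jj1; rewrite -(setU1K iJ) Jj1 setDv.
Qed.

End AddPoint.

Lemma block_of_add_point k (J : {ffun 'I_k.+1 -> {set 'I_n}}) j :
  ordered_partition_of (S :\ i) J -> block_of (add_point J j) = j.
Proof.
by move=> partJ; apply: (block_ofE (opart_add_point partJ j)); rewrite mem_add_point !eqxx.
Qed.

Lemma opart_insert_set1 k (p : 'I_k.+1) (J : {ffun 'I_k -> {set 'I_n}}) :
  ordered_partition_of S (ffun_insert p J [set i]) = ordered_partition_of (S :\ i) J.
Proof.
set I := ffun_insert p J [set i].
have Ip : I p = [set i] by rewrite ffun_insert_at.
have Ilift z : I (lift p z) = J z by rewrite ffun_insert_lift.
apply/idP/idP => [/ordered_partitionP[neI injI covI] | partJ].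
  have iI y : (i \in I y) = (y == p).
    apply/idP/eqP => [iIy|->]; last by rewrite Ip set11.
    by apply: (injI i _ _ iIy); rewrite Ip set11.
  apply/ordered_partitionP; split.
  - by move=> z; rewrite -Ilift.
  - by move=> x z1 z2; rewrite -!Ilift => /injI/[apply]/lift_inj.
  - move=> x; rewrite !inE covI; apply/andP/existsP => [[xi /existsP[y]]|[z xJz]].
      case: (unliftP p y) => [z|] ->; rewrite ?Ilift ?Ip ?inE; first by exists z.
      by rewrite (negbTE xi).
    split; last by apply/existsP; exists (lift p z); rewrite Ilift.
    by apply: contraTneq xJz => ->; rewrite -Ilift iI eq_sym neq_lift.
have iJ z : (i \in J z) = false := opart_notin z partJ.
case/ordered_partitionP: partJ => neJ injJ covJ; apply/ordered_partitionP; split.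
- move=> y; case: (unliftP p y) => [z|] ->; rewrite ?Ilift ?Ip //.
  by apply/set0Pn; exists i; rewrite set11.
- move=> x y1 y2.
  case: (unliftP p y1) => [z1|] ->; case: (unliftP p y2) => [z2|] ->;
    rewrite ?Ilift ?Ip ?inE //.
  + by move/injJ/[apply]->.
  + by move=> + /eqP xi; rewrite xi iJ.
  + by move/eqP->; rewrite iJ.
- move=> x; have [->|xi] := eqVneq x i.
    by rewrite Si; apply/esym/existsP; exists p; rewrite Ip set11.
  have -> : (x \in S) = (x \in S :\ i) by rewrite !inE xi.
  rewrite covJ; apply/existsP/existsP => -[y]; first by exists (lift p y); rewrite Ilift.
  by case: (unliftP p y) => [z|] ->; rewrite ?Ilift ?Ip ?inE ?(negbTE xi) //; exists z.
Qed.

End AddRemovePoint.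

Section PartitionSum.
Variables (R : comPzRingType) (n : nat) (w : {set 'I_n} -> nat -> R) (N D : nat).

Local Notation blocks_degrees k := ({ffun 'I_k -> {set 'I_n}} * {ffun 'I_k -> 'I_N})%type.

Definition total_degree k (d : {ffun 'I_k -> 'I_N}) : nat := (\sum_(j < k) d j)%N.

Definition partition_weight k (I : {ffun 'I_k -> {set 'I_n}}) (d : {ffun 'I_k -> 'I_N}) : R :=
  \prod_(j < k) w (I j) (d j).

Definition partition_sum k (S : {set 'I_n}) : R :=
  \sum_(q : blocks_degrees k |
          ordered_partition_of S q.1 && (total_degree q.2 == D))
    partition_weight q.1 q.2.

Lemma partition_sum0 (S : {set 'I_n}) : S != set0 -> partition_sum 0 S = 0.
Proof.
case/set0Pn=> x Sx; rewrite /partition_sum big_pred0 // => -[I d] /=.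
apply/negbTE/andP => -[/ordered_partitionP[_ _ covI] _].
by move: Sx; rewrite covI => /existsP[[]].
Qed.

Lemma partition_sum_gt_card k (S : {set 'I_n}) : (#|S| < k)%N -> partition_sum k S = 0.
Proof.
move=> ltSk; rewrite /partition_sum big_pred0 // => -[I d] /=.
by apply/negbTE/andP => -[/opart_leq_card]; rewrite leqNgt ltSk.
Qed.

Lemma total_degree_insert k (p : 'I_k.+1) (d : {ffun 'I_k -> 'I_N}) x :
  total_degree (ffun_insert p d x) = (x + total_degree d)%N.
Proof.
rewrite /total_degree (bigD1_ord p) //= ffun_insert_at.
by under eq_bigr do rewrite ffun_insert_lift.
Qed.

Variables (i : 'I_n) (S : {set 'I_n}).
Hypothesis Si : i \in S.
Hypothesis w_set1 : forall d, w [set i] d = (d == 0)%N%:R.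
Hypothesis w_setU1 : forall (A : {set 'I_n}) d, i \notin A -> A != set0 ->
  w (i |: A) d = w A d * ((2 * d + 1)%:R - (2 * #|A|)%:R).

Lemma partition_weight_add_point k (J : {ffun 'I_k -> {set 'I_n}}) d j :
    ordered_partition_of (S :\ i) J ->
  partition_weight (add_point i J j) d
    = partition_weight J d * ((2 * d j + 1)%:R - (2 * #|J j|)%:R).
Proof.
move=> partJ; have iJ := opart_notin j partJ.
case/ordered_partitionP: partJ => neJ _ _.
rewrite /partition_weight (bigD1 j) // [in RHS](bigD1 j) //= ffunE eqxx.
rewrite w_setU1 ?iJ // mulrAC; congr (_ * _ * _); apply: eq_bigr => y /negbTE yj.
by rewrite ffunE yj.
Qed.

Lemma sum_add_point_factors k (J : {ffun 'I_k -> {set 'I_n}}) (d : {ffun 'I_k -> 'I_N}) :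
    ordered_partition_of (S :\ i) J -> total_degree d = D ->
  \sum_(j < k) ((2 * d j + 1)%:R - (2 * #|J j|)%:R)
    = (2 * D + k)%:R - (2 * #|S :\ i|)%:R :> R.
Proof.
move=> partJ <-; rewrite sumrB -!natr_sum big_split /= -!big_distrr /=.
by rewrite sum1_card card_ord -(card_opart partJ).
Qed.

Lemma sum_merged_blocks k :
  \sum_(q : blocks_degrees k.+1 |
          ordered_partition_of S q.1 && (total_degree q.2 == D)
          && (q.1 (block_of i q.1) != [set i]))
    partition_weight q.1 q.2
  = ((2 * D + k.+1)%:R - (2 * #|S :\ i|)%:R) * partition_sum k.+1 (S :\ i).
Proof.
rewrite (reindex_onto (fun r => (add_point i r.1.1 r.2, r.1.2))
                      (fun q => ((remove_point i q.1, q.2), block_of i q.1))) /=; last first.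
  by move=> [I d] /= /andP[/andP[partI _] _]; rewrite (add_point_remove_point Si).
rewrite (eq_bigl (fun r => ordered_partition_of (S :\ i) r.1.1 && (total_degree r.1.2 == D)
                           && xpredT r.2)); last first.
  move=> [[J d] j] /=; rewrite andbT; apply/idP/andP => [|[partJ ->]].
    case/andP=> /andP[/andP[partI ->] Ib1] /eqP[remJ _]; split=> //.
    by rewrite -remJ opart_remove_point.
  by rewrite (opart_add_point Si partJ) (block_of_add_point Si _ partJ)
             (remove_point_add_point partJ) eqxx (add_point_neq_set1 partJ).
rewrite -(pair_big (fun r => ordered_partition_of (S :\ i) r.1 && (total_degree r.2 == D))
                   xpredT (fun r j => partition_weight (add_point i r.1 j) r.2)) /=.
rewrite /partition_sum mulr_sumr; apply: eq_bigr => -[J d] /= /andP[partJ /eqP degd].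
under eq_bigr do rewrite partition_weight_add_point //.
by rewrite -mulr_sumr mulrC sum_add_point_factors.
Qed.

Lemma sum_singleton_block_at k (p : 'I_k.+1) : (0 < N)%N ->
  \sum_(q : blocks_degrees k.+1 |
          ordered_partition_of S q.1 && (total_degree q.2 == D) && (q.1 p == [set i]))
    partition_weight q.1 q.2
  = partition_sum k (S :\ i).
Proof.
move=> N_gt0; pose d0 := Ordinal N_gt0.
transitivity (\sum_(q : blocks_degrees k.+1 |
    ordered_partition_of S q.1 && (total_degree q.2 == D) && (q.1 p == [set i])
    && (q.2 p == d0)) partition_weight q.1 q.2).
  rewrite [RHS]big_mkcondr /=; apply: eq_bigr => -[I d] /= /andP[_ /eqP Ip].
  rewrite /partition_weight (bigD1_ord p) //= Ip w_set1.
  have -> : (d p == 0 :> nat) = (d p == d0) by rewrite -val_eqE.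
  by case: (d p == d0); rewrite ?mul1r ?mul0r.
rewrite (reindex_onto (fun r => (ffun_insert p r.1 [set i], ffun_insert p r.2 d0))
                      (fun q => (ffun_delete p q.1, ffun_delete p q.2))) /=; last first.
  by move=> [I d] /= /andP[/andP[_ /eqP <-] /eqP <-]; rewrite !ffun_deleteK.
rewrite /partition_sum; apply: eq_big => -[J d] /=.
  rewrite opart_insert_set1 // total_degree_insert !ffun_insert_at !ffun_insertK.
  by rewrite !eqxx !andbT.
move=> _; rewrite /partition_weight (bigD1_ord p) //= !ffun_insert_at w_set1 mul1r.
by apply: eq_bigr => z _; rewrite !ffun_insert_lift.
Qed.

Lemma sum_singleton_blocks k : (0 < N)%N ->
  \sum_(q : blocks_degrees k.+1 |
          ordered_partition_of S q.1 && (total_degree q.2 == D)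
          && (q.1 (block_of i q.1) == [set i]))
    partition_weight q.1 q.2
  = k.+1%:R * partition_sum k (S :\ i).
Proof.
move=> N_gt0; rewrite (partition_big (fun q : blocks_degrees k.+1 =>
                         block_of i q.1) xpredT) //=.
rewrite (eq_bigr (fun _ => partition_sum k (S :\ i))).
  by rewrite sumr_const card_ord mulr_natl.
move=> p _; rewrite -(sum_singleton_block_at p N_gt0); apply: eq_bigl => -[I d] /=.
apply/idP/idP => [/andP[/andP[/andP[-> ->] Ib1] /eqP <-] // | /andP[/andP[partI ->]]].
move=> /eqP Ip; have bp : block_of i I = p by apply: (block_ofE partI); rewrite Ip set11.
by rewrite partI bp Ip !eqxx.
Qed.

Lemma partition_sum_rec k : (0 < N)%N ->
  partition_sum k.+1 S
    = k.+1%:R * partition_sum k (S :\ i)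
      + ((2 * D + k.+1)%:R - (2 * #|S :\ i|)%:R) * partition_sum k.+1 (S :\ i).
Proof.
move=> N_gt0; rewrite /partition_sum (bigID (fun q : blocks_degrees k.+1 =>
                                 q.1 (block_of i q.1) == [set i])) /=.
by rewrite sum_singleton_blocks // sum_merged_blocks.
Qed.

End PartitionSum.

Section BlockWeight.
Variables (R : numFieldType) (n : nat) (a : 'I_n -> R).

Definition block_weight (A : {set 'I_n}) (d : nat) : R :=
  binomr (2 * aset a A + 1) (2 * d) *
  \prod_(1 <= l < #|A|) ((2 * d + 1)%:R - (2 * l)%:R).

Variable i : 'I_n.
Hypothesis ai0 : a i = 0.

Lemma block_weight_set1 d : block_weight [set i] d = (d == 0)%N%:R.
Proof.
rewrite /block_weight /aset big_set1 ai0 mulr0 add0r cards1 big_geq // mulr1 /binomr.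
case: d => [|d]; first by rewrite big_ord0 divr1.
by rewrite mulnS !big_ord_recl /= subrr mul0r mulr0 mul0r.
Qed.

Lemma block_weight_setU1 (A : {set 'I_n}) d : i \notin A -> A != set0 ->
  block_weight (i |: A) d = block_weight A d * ((2 * d + 1)%:R - (2 * #|A|)%:R).
Proof.
move=> iA A0; rewrite /block_weight /aset big_setU1 //= ai0 add0r cardsU1 iA.
by rewrite big_nat_recr ?mulrA // card_gt0.
Qed.

End BlockWeight.

Lemma Pgn_partition_sum (R : numFieldType) g n (a : 'I_n -> R) :
  Pgn g a = \sum_(1 <= k < n.+1) (-1) ^+ k * ((2 * g - 3 + k)`!%:R / k`!%:R) *
              partition_sum (block_weight a) (g - 1 + n) (g - 2 + n) k setT.
Proof. by apply: eq_bigr => k _; rewrite pair_big. Qed.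

Lemma alternating_factorial_sum_eq0 (R : numFieldType) (m n : nat) (A B : nat -> R) :
    (forall k, A k.+1 = k.+1%:R * B k + (m + k.+2)%:R * B k.+1) ->
    B 0%N = 0 -> B n = 0 ->
  \sum_(1 <= k < n.+1) (-1) ^+ k * ((m + k)`!%:R / k`!%:R) * A k = 0.
Proof.
move=> recA B0 Bn.
pose C k := (-1) ^+ k * ((m + k.+1)`!%:R / k`!%:R) * B k.
(* The summand of index k.+1 is C k.+1 - C k. *)
rewrite big_add1 /= (@telescope_sumr_eq _ 0 n C) // => [|k _].
  by rewrite /C Bn B0 !mulr0 subrr.
have k1_neq0 : k.+1%:R != 0 :> R by rewrite pnatr_eq0.
have kf_neq0 : k`!%:R != 0 :> R by rewrite pnatr_eq0 -lt0n fact_gt0.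
rewrite recA /C !addnS !factS !natrM !exprS.
by field; rewrite kf_neq0 addrC natr1 k1_neq0.
Qed.

Theorem proposition5p3 (g n : nat) (hg : (2 <= g)%N) (hn : (2 <= n)%N)
    (R : numFieldType) (i : 'I_n) (a : 'I_n -> R) :
  a i = 0 -> Pgn g a = 0.
Proof.
move=> ai0; rewrite Pgn_partition_sum.
have cardT : #|[set: 'I_n] :\ i| = n.-1 by rewrite setTD cardsC1 card_ord.
apply: (alternating_factorial_sum_eq0 (B := fun k =>
  partition_sum (block_weight a) (g - 1 + n) (g - 2 + n) k ([set: 'I_n] :\ i))).
- move=> k; rewrite (partition_sum_rec _ (in_setT i) (block_weight_set1 ai0)
                                      (block_weight_setU1 ai0)); last by lia.
  by rewrite cardT -natrB; [congr (_ * _ + _%:R * _); lia | lia].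
- by apply: partition_sum0; rewrite -card_gt0 cardT; lia.
- by apply: partition_sum_gt_card; rewrite cardT; lia.
Qed.
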